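(* Let $u$ be a word of length $n\ge1$ and let $\mathsf{C}[1..n]$ be its cover array. Then $$\mathrm{lseed}(u)=\min\{\mathsf{C}[j] : \mathrm{per}(u)\le j\le n\}.$$
   Context: Positions in $u$ are numbered $1,\dots,n$; $u[i..j]=u_i\cdots u_j$. For a nonempty word $x$, $\mathrm{per}(x)$ is the smallest positive integer $p$ with $x_i=x_{i+p}$ for all $1\le i\le|x|-p$. A word $s$ covers $w$ if every position of $w$ lies in some occurrence of $s$ in $w$. $\mathrm{cover}(x)$ is the length of the shortest word covering $x$, and the cover array is $\mathsf{C}[i]=\mathrm{cover}(u[1..i])$. A seed of $u$ is a factor $s$ of $u$ such that $u$ is a factor of some word covered by $s$; a left seed is a seed that is a prefix of $u$; $\mathrm{lseed}(u)$ is the length of the shortest left seed of $u$. *)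

From mathcomp Require Import all_boot.
From mathcomp Require Import boolp.

Set Implicit Arguments.
Unset Strict Implicit.
Unset Printing Implicit Defensive.

(* Words are sequences over an arbitrary alphabet T : eqType.
   Positions are 0-based in Rocq: 0-based position i is position i+1 of the paper. *)

Definition occurs (T : eqType) (s w : seq T) (j : nat) : bool :=
  (j + size s <= size w) && (take (size s) (drop j w) == s).

Definition covers (T : eqType) (s w : seq T) : Prop :=
  forall i, i < size w -> exists j, occurs s w j && (j <= i < j + size s).

Definition is_period (T : eqType) (x : seq T) (p : nat) : bool :=
  (0 < p) && all (fun i => onth x i == onth x (i + p)) (iota 0 (size x - p)).

Lemma is_period_ex (T : eqType) (x : seq T) : exists p, is_period x p.
Proof. by exists (size x).+1; rewrite /is_period /= subnS subnn. Qed.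

Definition per (T : eqType) (x : seq T) : nat := ex_minn (is_period_ex x).

Lemma covers_refl (T : eqType) (x : seq T) : covers x x.
Proof.
move=> i Hi; exists 0; rewrite /occurs add0n leqnn drop0 take_size eqxx /=.
by rewrite Hi.
Qed.

Lemma cover_ex (T : eqType) (x : seq T) :
  exists k, `[< exists s : seq T, size s = k /\ covers s x >].
Proof. by exists (size x); apply/asboolP; exists x; split=> //; apply: covers_refl. Qed.

Definition cover (T : eqType) (x : seq T) : nat := ex_minn (cover_ex x).

(* cover array: C[i] = cover (u[1..i]) *)
Definition cover_array (T : eqType) (u : seq T) (i : nat) : nat := cover (take i u).

Definition seed (T : eqType) (s u : seq T) : Prop :=
  infix s u /\ exists w : seq T, covers s w /\ infix u w.

Definition left_seed (T : eqType) (s u : seq T) : Prop := seed s u /\ prefix s u.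

Lemma lseed_ex (T : eqType) (u : seq T) :
  exists k, `[< exists s : seq T, size s = k /\ left_seed s u >].
Proof.
exists (size u); apply/asboolP; exists u; split=> //.
split; last exact: prefix_refl.
split; first exact: infix_refl.
by exists u; split; [apply: covers_refl | apply: infix_refl].
Qed.

Definition lseed (T : eqType) (u : seq T) : nat := ex_minn (lseed_ex u).

(* A prefix [s] covering [u[..j]] with [per u <= j] keeps covering the periodic
   extension of [u[..j]] (shift each occurrence by the period), and that
   extension contains [u]; so [s] is a left seed.  Conversely, let [u[..j]] be
   the longest prefix covered by a left seed [s].  If [j < |u|], the occurrence
   of [s] covering the next position in a word containing [u] cannot end inside
   [u] by maximality, so it overhangs the end of [u]; its start [b <= j] is then
   a period of [u] because [s] is itself a prefix of [u]. *)

From Pilot Require Import Defs.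
From mathcomp Require Import all_boot.
From mathcomp Require Import boolp.
From mathcomp Require Import zify.

Set Implicit Arguments.
Unset Strict Implicit.
Unset Printing Implicit Defensive.

Section Occurrences.
Context {T : eqType}.
Implicit Types s u v w x : seq T.

Lemma occurs_take s w m a :
  occurs s (take m w) a = occurs s w a && (a + size s <= m).
Proof.
rewrite /occurs size_take_min; case: (leqP (a + size s) m) => Hm; last first.
  by rewrite andbF; apply/negbTE; rewrite negb_and leq_min (leqNgt _ m) Hm.
by rewrite andbT leq_min Hm !take_drop take_takel //; lia.
Qed.

Lemma occurs_drop s w k a :
  k <= size w -> occurs s (drop k w) a = occurs s w (k + a).
Proof.
move=> Hk; rewrite /occurs size_drop drop_drop (addnC a k).
by rewrite leq_subRL ?addnA.
Qed.

Lemma occurs_catl s u v b :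
  b + size s <= size u -> occurs s (u ++ v) b = occurs s u b.
Proof.
move=> Hb; rewrite -{2}(take_size_cat v (erefl (size u))).
by rewrite occurs_take Hb andbT.
Qed.

Lemma occurs_cat_overhang s u v b :
  occurs s (u ++ v) b -> b <= size u < b + size s -> prefix (drop b u) s.
Proof.
case/andP=> _ /eqP Es /andP[Hbu Hover].
have Edrop : drop b (u ++ v) = drop b u ++ v.
  rewrite drop_cat; case: ltnP => // Hub.
  by rewrite (_ : b = size u) ?subnn ?drop_size ?drop0 //; lia.
rewrite -Es Edrop take_cat size_drop ltnNge (_ : size u - b <= size s) /=.
  exact: prefix_prefix.
lia.
Qed.

Lemma covers_prefix s x : 0 < size x -> covers s x -> prefix s x.
Proof.
move=> Hx /(_ 0 Hx) [a /andP[Ho Ha]].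
by move: Ho; rewrite (_ : a = 0) ?leqn0 /occurs ?drop0 -?prefixE => [/andP[]|]; lia.
Qed.

Lemma covers_take_occurs s u j b :
  covers s (take j u) -> occurs s u b -> b <= j <= b + size s ->
  covers s (take (b + size s) u).
Proof.
move=> Hc Hb /andP[Hbj Hjs]; have Hbu : b + size s <= size u by case/andP: Hb.
move=> i; rewrite size_takel // => Hi.
case: (ltnP i j) => Hij; last by exists b; rewrite occurs_take Hb leqnn; lia.
have Htj : j <= size u by lia.
have [a /andP[Ha Hai]] := Hc i (ltac:(by rewrite size_takel)).
exists a; rewrite Hai andbT occurs_take.
by move: Ha; rewrite occurs_take => /andP[-> Haj]; lia.
Qed.

End Occurrences.

Section PeriodicExtension.
Context {T : eqType} (g : nat -> T) (p : nat).
Hypothesis g_periodic : forall i, g (i + p) = g i.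

Lemma take_mkseq j m : take j (mkseq g m) = mkseq g (minn j m).
Proof. by rewrite /mkseq -map_take take_iota. Qed.

Lemma drop_mkseq_periodic m : drop p (mkseq g (p + m)) = mkseq g m.
Proof.
rewrite /mkseq -map_drop drop_iota add0n addKn.
rewrite -[p in iota p]addn0 iotaDl -map_comp.
by apply: eq_map => i /=; rewrite addnC g_periodic.
Qed.

Lemma covers_mkseq_periodic_step s m :
  p <= m -> covers s (mkseq g m) -> covers s (mkseq g (p + m)).
Proof.
move=> Hpm Hc i; rewrite size_mkseq => Hi.
have take_m : take m (mkseq g (p + m)) = mkseq g m.
  by rewrite take_mkseq (_ : minn m (p + m) = m) //; lia.
case: (ltnP i m) => Him.
  have [a /andP[Ha Hai]] := Hc i (ltac:(by rewrite size_mkseq)).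
  exists a; rewrite Hai andbT.
  by move: Ha; rewrite -take_m occurs_take => /andP[].
have [a /andP[Ha Hai]] := Hc (i - p) (ltac:(rewrite size_mkseq; lia)).
exists (p + a); apply/andP; split; last lia.
by rewrite -occurs_drop ?size_mkseq ?leq_addr // drop_mkseq_periodic.
Qed.

Lemma covers_mkseq_periodic s m k :
  p <= m -> covers s (mkseq g m) -> covers s (mkseq g (k * p + m)).
Proof.
move=> Hpm Hc; elim: k => [|k IH] //.
by rewrite mulSn -addnA; apply: covers_mkseq_periodic_step => //; lia.
Qed.

End PeriodicExtension.

Section Periods.
Context {T : eqType}.
Implicit Types x : seq T.

Lemma is_periodP (x0 : T) x p :
  reflect (0 < p /\ forall i, i + p < size x -> nth x0 x i = nth x0 x (i + p))
          (is_period x p).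
Proof.
apply: (iffP andP) => [[Hp /allP Hx] | [Hp Hx]]; split=> //.
  move=> i Hi; have /eqP := Hx i (ltac:(rewrite mem_iota; lia)).
  by rewrite !onthE !(nth_map x0) //; [case | lia].
apply/allP=> i; rewrite mem_iota => Hi.
rewrite !onthE !(nth_map x0) 1?Hx //; lia.
Qed.

Lemma nth_period_mod (x0 : T) x p i :
  is_period x p -> i < size x -> nth x0 x (i %% p) = nth x0 x i.
Proof.
case/(is_periodP x0)=> _ Hx; rewrite {1 3}(divn_eq i p).
elim: (i %/ p) => [|q IH] Hi; first by rewrite mul0n.
rewrite IH; last lia.
rewrite Hx; last lia.
by rewrite mulSn; congr nth; lia.
Qed.

Lemma mkseq_period_mod (x0 : T) x p :
  is_period x p -> mkseq (fun i => nth x0 x (i %% p)) (size x) = x.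
Proof.
move=> Hp; apply: (eq_from_nth (x0 := x0)); rewrite size_mkseq // => i Hi.
by rewrite nth_mkseq // nth_period_mod.
Qed.

Lemma is_period_drop_prefix x p : 0 < p -> prefix (drop p x) x -> is_period x p.
Proof.
case: x => [|x0 x'] Hp; first by rewrite /is_period Hp.
set x := x0 :: x'; rewrite prefixE size_drop => /eqP Hx.
apply/(is_periodP x0); split=> // i Hi.
by rewrite -(nth_take x0 (_ : i < size x - p)) ?Hx ?nth_drop 1?addnC //; lia.
Qed.

Lemma per_period x : is_period x (per x).
Proof. by rewrite /per; case: ex_minnP. Qed.

Lemma per_min x p : is_period x p -> per x <= p.
Proof. by rewrite /per; case: ex_minnP => m _; apply. Qed.

Lemma per_le_size x : 0 < size x -> per x <= size x.
Proof. by move=> Hx; apply: per_min; rewrite /is_period Hx subnn. Qed.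

End Periods.

Section LeftSeeds.
Context {T : eqType}.
Implicit Types s u x : seq T.

Lemma cover_min x s : covers s x -> Defs.cover x <= size s.
Proof. by move=> Hc; rewrite /Defs.cover; case: ex_minnP => m _; apply; apply/asboolP; exists s. Qed.

Lemma cover_attained x : exists2 s, size s = Defs.cover x & covers s x.
Proof. by rewrite /Defs.cover; case: ex_minnP => m /asboolP[s [Hs Hc]] _; exists s. Qed.

Lemma lseed_min u s : left_seed s u -> lseed u <= size s.
Proof. by move=> Hs; rewrite /lseed; case: ex_minnP => m _; apply; apply/asboolP; exists s. Qed.

Lemma lseed_attained u : exists2 s, size s = lseed u & left_seed s u.
Proof. by rewrite /lseed; case: ex_minnP => m /asboolP[s [Hs Hc]] _; exists s. Qed.

(* The prefix [u[..j]] spans a full period, so its periodic extension contains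
   [u] and is still covered: every occurrence can be shifted by [p]. *)
Lemma covers_take_left_seed u s p j :
  is_period u p -> p <= j <= size u -> covers s (take j u) -> left_seed s u.
Proof.
move=> Hper /andP[Hpj Hju] Hc.
have Hp : 0 < p by case/andP: Hper.
have x0 : T by case: u Hju {Hper Hc} => [|a l] /= Hju; [lia | exact: a].
pose g i := nth x0 u (i %% p).
have g_periodic i : g (i + p) = g i by rewrite /g modnDr.
have take_g m : m <= size u -> take m u = mkseq g m.
  move=> Hm; rewrite -{1}(mkseq_period_mod x0 Hper) take_mkseq.
  by congr mkseq; lia.
have Hsu : prefix s u.
  apply: prefix_trans (prefix_take u j); apply: covers_prefix => //.
  by rewrite size_takel; lia.
split=> //; split; first exact: prefixW.
exists (mkseq g (size u * p + j)); split.
  by apply: covers_mkseq_periodic => //; rewrite -take_g.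
apply/prefixW; rewrite prefixE take_mkseq (_ : minn _ _ = size u); last nia.
by rewrite -take_g // take_size.
Qed.

(* Position [j] of [u] is covered in the enclosing word by an occurrence starting
   at some [b <= j]: either it ends inside [u], extending the covered prefix, or
   it overhangs the end of [u], and then [b] is a period since [s] is a prefix. *)
Lemma left_seed_covers_take_step u s j :
  left_seed s u -> size s <= j < size u -> covers s (take j u) ->
  per u <= j \/ exists2 j', j < j' <= size u & covers s (take j' u).
Proof.
move=> [[_ [w [Hw /infixP[w1 [w2 Ew]]]]] Hsu] /andP[Hsj Hju] Hc.
have [c /andP[Hoc Hcj]] := Hw (size w1 + j) (ltac:(rewrite Ew !size_cat; lia)).
have [b Ecb] : exists b, c = size w1 + b by exists (c - size w1); lia.
have Hob : occurs s (u ++ w2) b.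
  rewrite -(drop_size_cat (u ++ w2) (erefl (size w1))) occurs_drop.
    by rewrite -Ecb -Ew.
  by rewrite size_cat leq_addr.
case: (leqP (b + size s) (size u)) => Hend.
  right; exists (b + size s); first lia.
  apply: (covers_take_occurs (b := b) Hc); first by rewrite -(occurs_catl w2 Hend).
  lia.
left; apply: leq_trans (_ : b <= j); last lia.
apply/per_min/is_period_drop_prefix; first lia.
by apply: prefix_trans Hsu; apply: (occurs_cat_overhang Hob); lia.
Qed.

Lemma left_seed_covers_take u s :
  left_seed s u -> 0 < size u -> exists2 j, per u <= j <= size u & covers s (take j u).
Proof.
move=> Hs Hu; have Hsu : prefix s u by case: Hs.
have Hsn : size s <= size u by case/prefixP: Hsu => t ->; rewrite size_cat leq_addr.
have covers_s : covers s (take (size s) u).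
  by move: Hsu; rewrite prefixE => /eqP ->; apply: covers_refl.
pose P j := (j <= size u) && `[< covers s (take j u) >].
have exP : exists j, P j by exists (size s); rewrite /P Hsn; apply/asboolP.
have boundP j : P j -> j <= size u by case/andP.
have [j /andP[Hju /asboolP Hcj] Hmax] := ex_maxnP exP boundP.
have Hsj : size s <= j by apply: Hmax; rewrite /P Hsn; apply/asboolP.
have Hpu := per_le_size Hu.
case: (ltnP j (size u)) => Hjn; last by exists j => //; lia.
case: (left_seed_covers_take_step Hs _ Hcj) => [| Hper | [j' Hj' Hcj']].
- by rewrite Hsj.
- by exists j => //; lia.
- have : j' <= j by apply: Hmax; rewrite /P; apply/andP; split; [lia | apply/asboolP].
  lia.
Qed.

End LeftSeeds.

Theorem lemma2 (T : eqType) (u : seq T) (hn : 0 < size u) :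
  (exists2 j, per u <= j <= size u & lseed u = cover_array u j) /\
  (forall j, per u <= j <= size u -> lseed u <= cover_array u j).
Proof.
have lseed_le_cover j : per u <= j <= size u -> lseed u <= cover_array u j.
  move=> Hj; have [s Hs Hc] := cover_attained (take j u).
  by rewrite /cover_array -Hs; apply/lseed_min/(covers_take_left_seed (per_period u) Hj).
split=> //.
have [s Hs Hls] := lseed_attained u.
have [j Hj Hc] := left_seed_covers_take Hls hn.
exists j => //; apply/eqP; rewrite eqn_leq lseed_le_cover //=.
by rewrite /cover_array -Hs cover_min.
Qed.
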